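(* Assume $\chi(0)<0$ and conditions (C) and (N) hold. Then there exists $\zeta_1\in(0,\zeta_2)$ such that: (1) $G:[0,\infty)\to[0,\infty)$ is continuous, $G(s)>0$ for $s>0$, and the right derivative $G'(0+)$ exists (possibly $+\infty$) and $G'(0+)>1$; (2) $G([\zeta_1,\zeta_2])\subseteq[\zeta_1,\zeta_2]$ and $G([0,\infty))\subseteq[0,\zeta_2]$; (3) $\min_{s\in[\zeta_1,\zeta_2]}G(s)=G(\zeta_1)$, and $G(s)>s$ for all $s\in(0,\zeta_1]$.
   Context: Let $(X,\mu)$ be a finite measure space. Let $K:\mathbb{R}\times X\to[0,\infty)$ be measurable and integrable on $\mathbb{R}\times X$, with $\int_{\mathbb{R}}K(s,\tau)\,ds>0$ for every $\tau$. Let $g:[0,\infty)\times X\to[0,\infty)$ be measurable, with $g(0,\tau)=0$, $g(\cdot,\tau)$ continuous for each $\tau$, and the derivative $g'(0,\tau)$ at $0$ existing and positive. $\chi(z)=1-\int_X\int_{\mathbb{R}}K(s,\tau)g'(0,\tau)e^{-sz}\,ds\,d\mu(\tau)$. Condition (C): for each $\delta>0$ there is a measurable $C_\delta\geq0$ on $X$ with $g(u,\tau)\leq C_\delta(\tau)u$ for $u\in[0,\delta]$ and $\int_X C_\delta(\tau)\left(\int_{\mathbb{R}}K(s,\tau)ds\right)d\mu(\tau)<+\infty$. Condition (N): (N1) there is $\tau_0\in X$ with $\mu(\{\tau_0\})=1$ such that $g(v,\tau)$ is increasing in $v$ for each $\tau\neq\tau_0$ and $g(v,\tau_0)>0$ for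 $v>0$; $\tilde g(v)=\int_{X\setminus\{\tau_0\}}g(v,\tau)\left(\int_{\mathbb{R}}K(s,\tau)ds\right)d\mu(\tau)$. (N2) there is $\zeta_2>0$ such that $\Theta(v)=v-\tilde g(v)$ is strictly increasing on $[0,\zeta_2]$ and $\Theta(\zeta_2)>C\max_{v\geq0}g(v,\tau_0)$, $C=\int_{\mathbb{R}}K(s,\tau_0)ds$. Define $G(v)=\Theta^{-1}(Cg(v,\tau_0))$, $v\geq0$, with $\Theta^{-1}$ the inverse of $\Theta|_{[0,\zeta_2]}$. *)

From HB Require Import structures.
From mathcomp Require Import all_boot all_order all_algebra.
From mathcomp Require Import all_classical all_reals all_analysis.
Set Implicit Arguments. Unset Strict Implicit. Unset Printing Implicit Defensive.
Import Order.TTheory GRing.Theory Num.Theory.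
Import numFieldNormedType.Exports.
Local Open Scope classical_set_scope.
Local Open Scope ring_scope.

Section Defs.
Context (R : realType) (d : measure_display) (X : measurableType d).

Definition kint (K : R * X -> R) (tau : X) : \bar R :=
  (\int[lebesgue_measure]_(s in setT) (K (s, tau))%:E)%E.

Definition chi (mu : {measure set X -> \bar R}) (K : R * X -> R)
  (g'0 : X -> R) (z : R) : \bar R :=
  (1%:E - \int[mu]_(tau in setT)
     \int[lebesgue_measure]_(s in setT) (K (s, tau) * g'0 tau * expR (- (s * z)))%:E)%E.

Definition gtilde (mu : {measure set X -> \bar R}) (K : R * X -> R)
  (g : R -> X -> R) (tau0 : X) (v : R) : R :=
  fine (\int[mu]_(tau in ~` [set tau0]) ((g v tau)%:E * kint K tau))%E.

Definition Theta mu K g tau0 (v : R) : R := v - gtilde mu K g tau0 v.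

Definition Theta_inv mu K g tau0 (zeta2 : R) (y : R) : R :=
  xget 0 [set v | 0 <= v <= zeta2 /\ Theta mu K g tau0 v = y].

Definition Gmap mu K g tau0 zeta2 (v : R) : R :=
  Theta_inv mu K g tau0 zeta2 (fine (kint K tau0) * g v tau0).

Definition condC (mu : {measure set X -> \bar R}) (K : R * X -> R)
  (g : R -> X -> R) : Prop :=
  forall delta : R, 0 < delta ->
    exists Cd : X -> R,
      measurable_fun setT Cd /\ (forall tau, 0 <= Cd tau) /\
      (forall tau u, 0 <= u <= delta -> g u tau <= Cd tau * u) /\
      (\int[mu]_(tau in setT) ((Cd tau)%:E * kint K tau) < +oo)%E.

End Defs.

From HB Require Import structures.
From mathcomp Require Import all_boot all_order all_algebra.
From mathcomp Require Import all_classical all_reals all_analysis.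
From mathcomp Require Import measurable_realfun.
From mathcomp Require Import ring lra.
Import Order.TTheory GRing.Theory Num.Theory.
Import numFieldNormedType.Exports.
Local Open Scope classical_set_scope.
Local Open Scope ring_scope.

(** The condition (N2) makes Theta a homeomorphism of [0, zeta2] onto
    [0, Theta zeta2], and C max g(., tau0) < Theta zeta2 makes
    G = Theta^-1 (C g(., tau0)) a continuous map of [0, +oo) into [0, zeta2]
    that vanishes exactly at 0.  Near 0, Theta u = u - gtilde u where
    gtilde u / u tends to L = \int_{X \ {tau0}} g'(0, tau) k(tau) dmu by
    dominated convergence, condition (C) providing the dominating function.
    Dividing Theta (G h) = C g(h, tau0) by G h then gives
    h / G h --> rho = (1 - L) / (C g'(0, tau0)), and chi(0) < 0 is exactly
    C g'(0, tau0) + L > 1, i.e. rho < 1.  Hence G'(0+) = 1 / rho > 1 and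
    G s > s near 0.  Finally zeta1 is a minimiser of G on [a, zeta2] for a
    suitably small a > 0. *)

Section RealFunctionsNearZero.
Context {R : realType}.
Implicit Types (f G : R -> R) (a b rho : R).

Lemma continuous_within_dist_le f a b :
  {in `[a, b] &, forall v w, `|f v - f w| <= `|v - w|} ->
  {within `[a, b], continuous f}.
Proof.
move=> f_lip; apply/subspace_continuousP => x xab.
apply/cvgrPdist_lt => e e0; rewrite near_withinE; exists e => //= y xy yab.
exact: le_lt_trans (f_lip _ _ xab yab) xy.
Qed.

Lemma gt_id_near_right G rho : rho < 1 -> (forall h, 0 < h -> 0 < G h) ->
  h / G h @[h --> 0^'+] --> rho -> \forall h \near 0^'+, h < G h.
Proof.
move=> rho_lt1 G_gt0 /cvgr_lt/(_ _ rho_lt1) ratio_lt1.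
near=> h; have h_gt0 : 0 < h by near: h; exact: nbhs_right_gt.
by rewrite -(mul1r (G h)) -ltr_pdivrMr ?G_gt0 //; near: h.
Unshelve. all: by end_near. Qed.

Lemma right_derivative_inv_ratio G rho : rho < 1 -> G 0 = 0 ->
  (forall h, 0 < h -> 0 < G h) -> h / G h @[h --> 0^'+] --> rho ->
  exists l : \bar R, (1%:E < l)%E /\ ((G h - G 0) / h)%:E @[h --> 0^'+] --> l.
Proof.
move=> rho_lt1 G0 G_gt0 ratio_rho.
have ratio_inv : \forall h \near 0^'+, (G h - G 0) / h = (h / G h)^-1.
  near=> h; by rewrite G0 subr0 invf_div.
have [rho0|rho_neq0] := eqVneq rho 0.
  rewrite {}rho0 in ratio_rho; exists +oo%E; split; first exact: ltry.
  apply/cvgeyPge => A; set A' := Num.max A 1.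
  have A'_gt0 : 0 < A' by rewrite lt_max ltr01 orbT.
  have /cvgr_lt ratio_small := ratio_rho.
  near=> h; have h_gt0 : 0 < h by near: h; exact: nbhs_right_gt.
  rewrite lee_fin G0 subr0 -invf_div (@le_trans _ _ A') ?le_max ?lexx //.
  rewrite -(invrK A') lef_pV2 ?posrE ?divr_gt0 ?invr_gt0 ?G_gt0 //.
  by apply: ltW; near: h; apply: ratio_small; rewrite invr_gt0.
have rho_gt0 : 0 < rho.
  rewrite lt_neqAle eq_sym rho_neq0 /= -(cvg_lim _ ratio_rho) //.
  apply: limr_ge; first by apply/cvg_ex; exists rho.
  near=> h; have h_gt0 : 0 < h by near: h; exact: nbhs_right_gt.
  by rewrite divr_ge0 // ltW ?G_gt0.
exists rho^-1%:E; split; first by rewrite lte_fin invf_gt1.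
apply/fine_cvgP; split; first exact: nearW.
have inv_ratio : \forall h \near 0^'+, (h / G h)^-1 = (G h - G 0) / h.
  by apply: filterS ratio_inv => h ->.
exact: cvg_trans (near_eq_cvg inv_ratio) (cvgV _ ratio_rho).
Unshelve. all: by end_near. Qed.

Lemma exists_segment_min_above_id G z2 :
  0 < z2 -> {within `[0, z2], continuous G} -> G 0 = 0 ->
  (forall s, 0 < s -> 0 < G s) -> (\forall h \near 0^'+, h < G h) ->
  exists2 z1, 0 < z1 < z2 &
    (forall s, z1 <= s <= z2 -> G z1 <= G s) /\
    (forall s, 0 < s <= z1 -> s < G s).
Proof.
move=> z2_gt0 G_cont G0 G_gt0 [eps /= eps_gt0 G_gt_id].
have above_id h : 0 < h < eps -> h < G h.
  move=> /andP[h_gt0 h_lt]; apply: G_gt_id => //=.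
  by rewrite sub0r normrN gtr0_norm.
have [_ G_right _] := (continuous_within_itvP G z2_gt0).1 G_cont.
have G_sub a : 0 <= a -> {within `[a, z2], continuous G}.
  move=> a_ge0; apply: continuous_subspaceW G_cont => x /=.
  by rewrite !in_itv /= => /andP[/(le_trans a_ge0) -> ->].
pose e := Num.min (eps / 2) (z2 / 2).
have e_gt0 : 0 < e by rewrite lt_min !divr_gt0.
have e_lt_eps : e < eps by rewrite gt_min; apply/orP; left; lra.
have e_lt_z2 : e < z2 by rewrite gt_min; apply/orP; right; lra.
(* G c is the minimum of G on [e, z2]; a is so close to 0 that G a < G c,
   which forces the minimiser of G on [a, z2] below e, where G > id. *)
have [c c_in G_min] := EVT_min (ltW e_lt_z2) (G_sub _ (ltW e_gt0)).
have m_gt0 : 0 < G c.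
  by apply: G_gt0; move: c_in; rewrite in_itv /= => /andP[/(lt_le_trans e_gt0)].
have [eta /= eta_gt0 G_small] : \forall x \near 0^'+, G x < G c.
  by move: G_right; rewrite G0 => /cvgr_lt; apply.
pose a := Num.min (eta / 2) e.
have a_gt0 : 0 < a by rewrite lt_min divr_gt0.
have a_le_e : a <= e by rewrite ge_min lexx orbT.
have a_le_z2 : a <= z2 by rewrite (le_trans a_le_e) // ltW.
have Ga_lt : G a < G c.
  apply: G_small => //=; rewrite sub0r normrN gtr0_norm // gt_min.
  by apply/orP; left; lra.
have [z1 z1_in Gz1_min] := EVT_min a_le_z2 (G_sub _ (ltW a_gt0)).
move: z1_in; rewrite in_itv /= => /andP[a_le_z1 z1_le_z2].
have z1_lt_e : z1 < e.
  rewrite ltNge; apply/negP => e_le_z1.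
  have : G c <= G z1 by apply: G_min; rewrite in_itv /= e_le_z1.
  have : G z1 <= G a by apply: Gz1_min; rewrite in_itv /= lexx.
  by move=> Gz1_le_Ga /le_trans/(_ Gz1_le_Ga)/(lt_le_trans Ga_lt); rewrite ltxx.
have z1_gt0 : 0 < z1 := lt_le_trans a_gt0 a_le_z1.
exists z1; first by rewrite z1_gt0 (lt_trans z1_lt_e).
split=> [s /andP[z1_le_s s_le_z2]|s /andP[s_gt0 s_le_z1]].
  by apply: Gz1_min; rewrite in_itv /= s_le_z2 (le_trans a_le_z1).
by apply: above_id; rewrite s_gt0 (le_lt_trans s_le_z1) // (lt_trans z1_lt_e).
Qed.

End RealFunctionsNearZero.

Section SegmentInverse.
Context {R : realType} (f : R -> R) (b : R).

Definition segment_inv (y : R) : R := xget 0 [set v | 0 <= v <= b /\ f v = y].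

Hypotheses (b_gt0 : 0 < b) (f_cont : {within `[0, b], continuous f})
  (f_incr : forall v w, 0 <= v -> v < w -> w <= b -> f v < f w).

Let f_nondecr v w : 0 <= v -> v <= w -> w <= b -> f v <= f w.
Proof. by move=> v_ge0; rewrite le_eqVlt => /predU1P[->//|vw] wb; exact/ltW/f_incr. Qed.

Lemma segment_invP {y} : f 0 <= y <= f b ->
  0 <= segment_inv y <= b /\ f (segment_inv y) = y.
Proof.
move=> y_in; have f0_le_fb : f 0 <= f b by rewrite f_nondecr // ltW.
have [|c c_in fc] := @IVT _ f 0 b y (ltW b_gt0) f_cont.
  by rewrite (min_idPl f0_le_fb) (max_idPr f0_le_fb).
have := xgetPex 0 (_ : exists v, 0 <= v <= b /\ f v = y); apply.
by exists c; move: c_in; rewrite in_itv.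
Qed.

Lemma segment_invK : {in `[0, b], cancel f segment_inv}.
Proof.
move=> v; rewrite in_itv /= => v_in.
have [v_ge0 v_le_b] := andP v_in.
have fv_in : f 0 <= f v <= f b by rewrite !f_nondecr ?lexx.
have [/andP[u_ge0 u_le_b]] := segment_invP fv_in.
move: (segment_inv _) u_ge0 u_le_b => u u_ge0 u_le_b fu.
have [uv|vu|//] := ltgtP u v.
- by have := f_incr _ _ u_ge0 uv v_le_b; rewrite fu ltxx.
- by have := f_incr _ _ v_ge0 vu u_le_b; rewrite fu ltxx.
Qed.

Lemma segment_inv_continuous : {within `[f 0, f b], continuous segment_inv}.
Proof. exact: segment_can_le_continuous (ltW b_gt0) f_cont segment_invK. Qed.

End SegmentInverse.

Lemma cvg_at_right_of_gt (R : realType) (T : Type) (F : set_system T)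
    (FF : Filter F) (f : T -> R) (l : R) :
  f x @[x --> F] --> l -> (\forall x \near F, l < f x) ->
  f x @[x --> F] --> l^'+.
Proof.
move=> f_cvg f_gt P /= [e /= e_gt0 HP].
have /cvgrPdist_lt/(_ _ e_gt0) f_near := f_cvg.
by apply: filterS2 f_near f_gt => x; exact: HP.
Qed.

Section InverseComposition.
Context {R : realType}.
Variables (q y : R -> R) (z2 L c : R).
Hypotheses (z2_gt0 : 0 < z2) (q0 : q 0 = 0)
  (q_nondecr : forall v w, 0 <= v -> v <= w -> w <= z2 -> q v <= q w)
  (theta_incr : forall v w, 0 <= v -> v < w -> w <= z2 -> v - q v < w - q w)
  (q_ratio : q u / u @[u --> 0^'+] --> L)
  (y_cont : {within `[0, +oo[, continuous y}) (y0 : y 0 = 0)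
  (y_gt0 : forall s, 0 < s -> 0 < y s)
  (y_lt : forall s, 0 <= s -> y s < z2 - q z2)
  (y_ratio : y h / h @[h --> 0^'+] --> c)
  (c_gt0 : 0 < c) (cL_gt1 : 1 < c + L).

Let theta v := v - q v.
Let G := segment_inv theta z2 \o y.

Let theta0 : theta 0 = 0.
Proof. by rewrite /theta q0 subr0. Qed.

Let theta_z2_gt0 : 0 < theta z2.
Proof. by rewrite -theta0 theta_incr. Qed.

Let theta_continuous : {within `[0, z2], continuous theta}.
Proof.
apply: continuous_within_dist_le.
suff theta_lip v w : 0 <= v -> v <= w -> w <= z2 ->
    `|theta v - theta w| <= `|v - w|.
  move=> v w; rewrite !in_itv /= => /andP[v_ge0 v_le] /andP[w_ge0 w_le].
  have [vw|/ltW wv] := leP v w; first exact: theta_lip.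
  by rewrite distrC (distrC v); apply: theta_lip.
move=> v_ge0; rewrite le_eqVlt => /predU1P[->|vw wz2]; first by rewrite !subrr.
have q_le := q_nondecr _ _ v_ge0 (ltW vw) wz2.
have theta_lt := theta_incr _ _ v_ge0 vw wz2.
rewrite /theta distrC (distrC v) !ger0_norm ?subr_ge0 ?(ltW vw) ?(ltW theta_lt) //.
lra.
Qed.

Let theta_invP := @segment_invP _ theta z2 z2_gt0 theta_continuous theta_incr.
Let theta_invK := segment_invK theta z2 z2_gt0 theta_continuous theta_incr.

Let y_in s : 0 <= s -> theta 0 <= y s <= theta z2.
Proof.
rewrite theta0 le_eqVlt => /predU1P[<-|s_gt0]; first by rewrite y0 lexx ltW.
by apply/andP; split; apply: ltW; [exact: y_gt0 | exact/y_lt/ltW].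
Qed.

Let G_spec s : 0 <= s -> 0 <= G s <= z2 /\ theta (G s) = y s.
Proof. by move=> s_ge0; apply: theta_invP => //; exact: y_in. Qed.

Let G0 : G 0 = 0.
Proof.
by rewrite /G /= y0 -{1}theta0 theta_invK // in_itv /= lexx ltW.
Qed.

Let G_gt0 s : 0 < s -> 0 < G s.
Proof.
move=> s_gt0; have [/andP[G_ge0 _] thetaG] := G_spec _ (ltW s_gt0).
rewrite lt_neqAle G_ge0 andbT; apply/eqP => G_eq0.
by move: thetaG; rewrite -G_eq0 theta0 => /esym/eqP; rewrite gt_eqF ?y_gt0.
Qed.

Let G_continuous : {within `[0, +oo[, continuous G}.
Proof.
have := segment_inv_continuous theta z2 z2_gt0 theta_continuous theta_incr.
rewrite theta0 => /(continuous_within_itvP _ theta_z2_gt0)[inv_inner inv_right _].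
have [y_inner y_right] := (continuous_within_itvcyP 0 y).1 y_cont.
apply/continuous_within_itvcyP; split.
  move=> x; rewrite in_itv /= andbT => x_gt0.
  apply: continuous_comp; first by apply: y_inner; rewrite in_itv /= x_gt0.
  by apply: inv_inner; rewrite in_itv /= y_gt0 // y_lt // ltW.
rewrite /G /= y0; apply: (cvg_comp _ _ _ inv_right).
apply: cvg_at_right_of_gt; first by move: y_right; rewrite y0.
by near=> h; apply: y_gt0; near: h; exact: nbhs_right_gt.
Unshelve. all: by end_near. Qed.

Let G_cvg_at_right : G h @[h --> 0^'+] --> 0^'+.
Proof.
apply: cvg_at_right_of_gt.
  by have [_] := (continuous_within_itvcyP 0 G).1 G_continuous; rewrite G0.
by near=> h; apply: G_gt0; near: h; exact: nbhs_right_gt.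
Unshelve. all: by end_near. Qed.

Let ratio_cvg : h / G h @[h --> 0^'+] --> (1 - L) / c.
Proof.
have G_ratio : \forall h \near 0^'+, (1 - q (G h) / G h) / (y h / h) = h / G h.
  near=> h; have h_gt0 : 0 < h by near: h; exact: nbhs_right_gt.
  have [_ thetaG] := G_spec _ (ltW h_gt0).
  have Gh_neq0 : G h != 0 by rewrite gt_eqF ?G_gt0.
  have yh_neq0 : y h != 0 by rewrite gt_eqF ?y_gt0.
  rewrite -thetaG /theta in yh_neq0 *; field.
  by rewrite Gh_neq0 yh_neq0 gt_eqF.
apply: cvg_trans (near_eq_cvg G_ratio) _.
apply: cvgM; last by apply: cvgV; [rewrite gt_eqF | exact: y_ratio].
by apply: cvgB; [exact: cvg_cst | exact: (cvg_comp _ _ G_cvg_at_right q_ratio)].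
Unshelve. all: by end_near. Qed.

Lemma inverse_composition_properties :
  exists zeta1 : R, 0 < zeta1 < z2 /\
    ({within `[0, +oo[, continuous G} /\
     (forall s, 0 <= s -> 0 <= G s) /\
     (forall s, 0 < s -> 0 < G s) /\
     (exists l : \bar R, (1%:E < l)%E /\
        (fun h => ((G h - G 0) / h)%:E) @ 0^'+ --> l)) /\
    ((forall s, zeta1 <= s <= z2 -> zeta1 <= G s <= z2) /\
     (forall s, 0 <= s -> 0 <= G s <= z2)) /\
    ((forall s, zeta1 <= s <= z2 -> G zeta1 <= G s) /\
     (forall s, 0 < s <= zeta1 -> s < G s)).
Proof.
have rho_lt1 : (1 - L) / c < 1 by rewrite ltr_pdivrMr // mul1r ltrBlDr.
have G_cont_z2 : {within `[0, z2], continuous G}.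
  apply: continuous_subspaceW G_continuous => x /=.
  by rewrite !in_itv /= => /andP[->].
have [z1 /andP[z1_gt0 z1_lt_z2] [G_min G_above]] :=
  exists_segment_min_above_id G z2 z2_gt0 G_cont_z2 G0 G_gt0
    (gt_id_near_right G _ rho_lt1 G_gt0 ratio_cvg).
have G_range s : 0 <= s -> 0 <= G s <= z2 by move=> /G_spec[].
exists z1; split; first by rewrite z1_gt0.
split; last split; last split=> //.
- split=> //; split; first by move=> s /G_range/andP[].
  split; first exact: G_gt0.
  exact: right_derivative_inv_ratio G _ rho_lt1 G0 G_gt0 ratio_cvg.
- split=> // s /andP[z1_le_s s_le_z2].
  rewrite (le_trans (ltW (G_above z1 _))) ?z1_gt0 ?lexx ?G_min ?z1_le_s //=.
  by have /andP[] := G_range s (le_trans (ltW z1_gt0) z1_le_s).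
Qed.

End InverseComposition.

Section RightRatioLimitUnderIntegral.
Context {R : realType} {d : measure_display} {X : measurableType d}.

Lemma measurable_fun_right_ratio_limit (A : set X) (f : R -> X -> R) (f' : X -> R) :
  (forall v, 0 < v -> measurable_fun A (f v)) ->
  (forall x, A x -> f v x / v @[v --> 0^'+] --> f' x) ->
  measurable_fun A f'.
Proof.
move=> f_meas f_ratio.
apply: (@measurable_fun_cvg _ _ _ _ (fun n x => f (harmonic n) x / harmonic n)).
  by move=> n; apply: measurable_funM (f_meas _ (harmonic_gt0 n)) (measurable_cst _).
move=> x Ax; apply: (cvg_at_rightP _ _ _).1 (f_ratio x Ax) _ (conj _ _).
  exact: harmonic_gt0.
exact: cvg_harmonic.
Qed.

Variables (mu : {measure set X -> \bar R}) (A : set X) (w : X -> \bar R)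
  (f : R -> X -> R) (f' : X -> R) (D : X -> R) (delta : R).
Hypotheses (mA : measurable A) (delta_gt0 : 0 < delta)
  (w_ge0 : forall x, (0 <= w x)%E) (w_meas : measurable_fun A w)
  (w_fin : {ae mu, forall x, A x -> w x \is a fin_num})
  (f_meas : forall v, 0 <= v -> measurable_fun A (f v))
  (f_ge0 : forall v x, 0 <= v -> 0 <= f v x)
  (f_le : forall x v, 0 <= v <= delta -> f v x <= D x * v)
  (f_ratio : forall x, f v x / v @[v --> 0^'+] --> f' x)
  (D_meas : measurable_fun A D)
  (Dw_lty : (\int[mu]_(x in A) ((D x)%:E * w x) < +oo)%E).

Let D_ge0 x : 0 <= D x.
Proof.
have fd_le : f delta x <= D x * delta by apply: f_le; rewrite lexx ltW.
by have := le_trans (f_ge0 delta x (ltW delta_gt0)) fd_le; rewrite pmulr_lge0.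
Qed.

Let Dw_ge0 x : (0 <= (D x)%:E * w x)%E.
Proof. by rewrite mule_ge0 ?lee_fin. Qed.

Let Dw_meas : measurable_fun A (fun x => (D x)%:E * w x)%E.
Proof. exact/emeasurable_funM/w_meas/measurable_EFinP. Qed.

Let fw_meas v : 0 <= v -> measurable_fun A (fun x => (f v x)%:E * w x)%E.
Proof. by move=> v_ge0; exact/emeasurable_funM/w_meas/measurable_EFinP/f_meas. Qed.

Lemma integral_weighted_fin_num v : 0 <= v <= delta ->
  (\int[mu]_(x in A) ((f v x)%:E * w x))%E \is a fin_num.
Proof.
move=> /[dup] v_in /andP[v_ge0 _].
rewrite ge0_fin_numE; last first.
  by apply: integral_ge0 => x _; rewrite mule_ge0 ?lee_fin ?f_ge0.
apply: (@le_lt_trans _ _ (\int[mu]_(x in A) (v%:E * ((D x)%:E * w x)))%E).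
  apply: ge0_le_integral => //.
  - by move=> x _; rewrite mule_ge0 ?lee_fin ?f_ge0.
  - exact: fw_meas.
  - exact/emeasurable_funM/Dw_meas/measurable_cst.
  move=> x _; rewrite muleA -EFinM lee_wpmul2r // lee_fin mulrC; exact: f_le.
by rewrite ge0_integralZl // lte_mul_pinfty.
Qed.

Let f'_ge0 x : 0 <= f' x.
Proof.
rewrite -(cvg_lim _ (f_ratio x)) //; apply: limr_ge; first by apply/cvg_ex; exists (f' x).
by near=> v; rewrite divr_ge0 ?f_ge0 //; apply: ltW; near: v; exact: nbhs_right_gt.
Unshelve. all: by end_near. Qed.

Let f'_le_D x : f' x <= D x.
Proof.
rewrite -(cvg_lim _ (f_ratio x)) //; apply: limr_le; first by apply/cvg_ex; exists (f' x).
near=> v; have v_gt0 : 0 < v by near: v; exact: nbhs_right_gt.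
rewrite ler_pdivrMr // f_le // ltW //=; apply: ltW; near: v; exact: nbhs_right_lt.
Unshelve. all: by end_near. Qed.

Let f'w_meas : measurable_fun A (fun x => (f' x)%:E * w x)%E.
Proof.
apply/emeasurable_funM/w_meas/measurable_EFinP.
apply: measurable_fun_right_ratio_limit => [v /ltW|x _]; first exact: f_meas.
exact: f_ratio.
Qed.

Lemma integral_weighted_limit_fin_num :
  (\int[mu]_(x in A) ((f' x)%:E * w x))%E \is a fin_num.
Proof.
rewrite ge0_fin_numE; last by apply: integral_ge0 => x _; rewrite mule_ge0 ?lee_fin.
apply: le_lt_trans Dw_lty; apply: ge0_le_integral => //.
- by move=> x _; rewrite mule_ge0 ?lee_fin.
- by move=> x _; rewrite lee_wpmul2r // lee_fin.
Qed.

Let ratio_seq_cvg (v : R^nat) : (forall n, 0 < v n <= delta) -> v n @[n --> \oo] --> 0 ->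
  fine (\int[mu]_(x in A) ((f (v n) x)%:E * w x))%E / v n @[n --> \oo] -->
  fine (\int[mu]_(x in A) ((f' x)%:E * w x))%E.
Proof.
move=> v_in v_cvg; have v_gt0 n : 0 < v n by have /andP[] := v_in n.
pose h n x := ((f (v n) x / v n)%:E * w x)%E.
have h_meas n : measurable_fun A (h n).
  apply/emeasurable_funM/w_meas/measurable_EFinP.
  exact/measurable_funM/measurable_cst/f_meas/ltW.
have h_cvg : {ae mu, forall x, A x -> h ^~ x @ \oo --> ((f' x)%:E * w x)%E}.
  apply: filterS w_fin => x /[apply] wx_fin.
  rewrite /h -(fineK wx_fin) -EFinM; under eq_fun do rewrite -EFinM.
  apply/fine_cvgP; split; first exact: nearW.
  apply: cvgMr_tmp; apply: (cvg_at_rightP _ _ _).1 (f_ratio x) _ (conj v_gt0 v_cvg).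
have Dw_int : mu.-integrable A (fun x => (D x)%:E * w x)%E.
  by apply/integrableP; split=> //; under eq_integral do rewrite gee0_abs //.
have h_le : {ae mu, forall x n, A x -> (`|h n x| <= (D x)%:E * w x)%E}.
  apply: aeW => x n _; have v_ge0 := ltW (v_gt0 n).
  rewrite /h gee0_abs ?mule_ge0 ?lee_fin ?divr_ge0 ?f_ge0 //.
  rewrite lee_wpmul2r // lee_fin ler_pdivrMr // f_le // v_ge0 /=.
  by case/andP: (v_in n).
have [_ _] := dominated_convergence mA h_meas f'w_meas h_cvg Dw_int h_le.
rewrite -(fineK integral_weighted_limit_fin_num).
have h_int n : (\int[mu]_(x in A) h n x = (fine
    (\int[mu]_(x in A) ((f (v n) x)%:E * w x)) / v n)%:E)%E.
  have vn_in : 0 <= v n <= delta by have /andP[/ltW -> ->] := v_in n.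
  have vn_ge0 := ltW (v_gt0 n).
  rewrite /h; under eq_integral do rewrite EFinM muleAC muleC.
  rewrite ge0_integralZl ?lee_fin ?invr_ge0 //.
  - by rewrite mulrC EFinM fineK ?integral_weighted_fin_num.
  - exact: fw_meas.
  - by move=> x _; rewrite mule_ge0 ?lee_fin ?f_ge0.
under eq_fun do rewrite h_int.
by move/fine_cvgP => [].
Qed.

Lemma integral_right_ratio_cvg :
  fine (\int[mu]_(x in A) ((f v x)%:E * w x))%E / v @[v --> 0^'+] -->
  fine (\int[mu]_(x in A) ((f' x)%:E * w x))%E.
Proof.
apply/cvg_at_rightP => v [v_gt0 v_cvg].
have [N _ v_le] := cvgr_le _ v_cvg _ delta_gt0.
rewrite -(cvg_shiftn N); apply: ratio_seq_cvg; last by rewrite cvg_shiftn.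
by move=> n; rewrite v_gt0 v_le //= leq_addl.
Qed.

End RightRatioLimitUnderIntegral.

Section AtomOfMassOne.
Context {R : realType} {d : measure_display} {X : measurableType d}.
Variables (mu : {measure set X -> \bar R}) (a : X).
Hypotheses (a_meas : measurable [set a]) (a_mass : mu [set a] = 1%E).

Lemma integral_atom (f : X -> \bar R) : (\int[mu]_(x in [set a]) f x = f a)%E.
Proof.
transitivity (\int[mu]_(x in [set a]) cst (f a) x)%E.
  by apply: eq_integral => x /[!inE] ->.
by rewrite integral_cst // a_mass mule1.
Qed.

Lemma ge0_integral_atom_split (f : X -> \bar R) :
  measurable_fun setT f -> (forall x, 0 <= f x)%E ->
  (\int[mu]_x f x = f a + \int[mu]_(x in ~` [set a]) f x)%E.
Proof.
move=> f_meas f_ge0; rewrite -(setUCr [set a]) ge0_integral_setU ?integral_atom //.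
- exact: measurableC.
- by rewrite setUCr; exact: f_meas.
- by rewrite /disj_set setICr.
Qed.

End AtomOfMassOne.

Section KernelMass.
Context {R : realType} {d : measure_display} {X : measurableType d}.
Variables (mu : {finite_measure set X -> \bar R}) (K : R * X -> R).
Hypotheses (K_ge0 : forall p, 0 <= K p)
  (K_int : (lebesgue_measure \x mu)%E.-integrable setT (EFin \o K)).

Lemma kint_ge0 tau : (0 <= kint K tau)%E.
Proof. by apply: integral_ge0 => s _; rewrite lee_fin. Qed.

Lemma measurable_kint : measurable_fun setT (kint K).
Proof.
apply: (@measurable_fun_fubini_tonelli_G _ _ _ _ _ lebesgue_measure (EFin \o K)).
  by case/integrableP: K_int.
by move=> p; rewrite lee_fin.
Qed.

Lemma integral_kint_lty : (\int[mu]_tau kint K tau < +oo)%E.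
Proof.
have := integrable21ltyP lebesgue_measure mu (measurable_int _ K_int).
move=> /proj1/(_ K_int); congr (_ < _)%E; apply: eq_integral => tau _.
by apply: eq_integral => s _ /=; rewrite ger0_norm.
Qed.

Lemma kint_fin_num_ae : {ae mu, forall tau, kint K tau \is a fin_num}.
Proof.
have k_int : mu.-integrable setT (kint K).
  apply/integrableP; split; first exact: measurable_kint.
  by under eq_integral do rewrite gee0_abs ?kint_ge0 //; exact: integral_kint_lty.
by apply: filterS (integrable_ae measurableT k_int) => tau; exact.
Qed.

Lemma integral_kernel_expR0 (c : R) tau : 0 <= c ->
  (\int[lebesgue_measure]_(s in setT) (K (s, tau) * c * expR (- (s * 0)))%:E =
   c%:E * kint K tau)%E.
Proof.
move=> c_ge0; under eq_integral do rewrite mulr0 oppr0 expR0 mulr1 EFinM.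
rewrite ge0_integralZr ?lee_fin //.
- by rewrite muleC.
- by apply: (measurable_fun_pair1 (f := EFin \o K)); exact: measurable_int K_int.
- by move=> s _; rewrite lee_fin.
Qed.

End KernelMass.

Section PerturbationTerm.
Context {R : realType} {d : measure_display} {X : measurableType d}.
Variables (mu : {finite_measure set X -> \bar R}) (K : R * X -> R)
  (g : R -> X -> R) (g'0 : X -> R) (tau0 : X) (zeta2 : R) (D : X -> R).
Hypotheses (K_ge0 : forall p, 0 <= K p)
  (K_int : (lebesgue_measure \x mu)%E.-integrable setT (EFin \o K))
  (g_meas : measurable_fun [set p : R * X | 0 <= p.1] (fun p => g p.1 p.2))
  (g_ge0 : forall v tau, 0 <= v -> 0 <= g v tau)
  (g0 : forall tau, g 0 tau = 0)
  (g'0_der : forall tau, (fun h => (g h tau - g 0 tau) / h) @ 0^'+ --> g'0 tau)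
  (g'0_pos : forall tau, 0 < g'0 tau)
  (tau0_meas : measurable [set tau0]) (tau0_mu : mu [set tau0] = 1%E)
  (g_incr : forall tau, tau <> tau0 ->
     forall v w, 0 <= v -> v <= w -> g v tau <= g w tau)
  (zeta2_pos : 0 < zeta2) (D_meas : measurable_fun setT D)
  (D_bound : forall tau u, 0 <= u <= zeta2 -> g u tau <= D tau * u)
  (D_lty : (\int[mu]_(tau in setT) ((D tau)%:E * kint K tau) < +oo)%E).

Local Notation B := (~` [set tau0]).
Local Notation k := (kint K).

Let mB : measurable B.
Proof. exact: measurableC. Qed.

Let k_ge0 : forall tau, (0 <= k tau)%E := kint_ge0 K K_ge0.
Let k_meas : measurable_fun setT k := measurable_kint mu K K_ge0 K_int.

Let measurable_g v : 0 <= v -> measurable_fun setT (g v).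
Proof.
move=> v_ge0; have -> : g v = (fun p => g p.1 p.2) \o (fun tau : X => (v, tau)) by [].
have mD0 : measurable [set p : R * X | 0 <= p.1].
  rewrite (_ : [set p : R * X | 0 <= p.1] = fst @^-1` `[0, +oo[).
    by rewrite -[X in measurable X]setTI; exact: measurable_fst.
  by apply/seteqP; split => p /=; rewrite in_itv /= andbT.
apply: (measurable_comp mD0 _ g_meas); first by move=> _ [tau _ <-].
exact: measurable_fun_pair.
Qed.

Let gk_meas v : 0 <= v -> measurable_fun setT (fun tau => (g v tau)%:E * k tau)%E.
Proof.
move=> v_ge0; apply: emeasurable_funM; last exact: k_meas.
exact/measurable_EFinP/measurable_g.
Qed.

Let g_ratio tau : g v tau / v @[v --> 0^'+] --> g'0 tau.
Proof. by have := g'0_der tau; rewrite g0; under eq_fun do rewrite subr0. Qed.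

Let D_ge0 tau : 0 <= D tau.
Proof.
have gz2_le : g zeta2 tau <= D tau * zeta2 by apply: D_bound; rewrite lexx ltW.
by have := le_trans (g_ge0 zeta2 tau (ltW zeta2_pos)) gz2_le; rewrite pmulr_lge0.
Qed.

Let DkB_lty : (\int[mu]_(tau in B) ((D tau)%:E * k tau) < +oo)%E.
Proof.
apply: le_lt_trans D_lty; apply: ge0_subset_integral => //.
- by apply: emeasurable_funM; [exact/measurable_EFinP|exact: k_meas].
- by move=> tau _; rewrite mule_ge0 ?k_ge0 ?lee_fin.
Qed.

Let integral_fin_num v : 0 <= v <= zeta2 ->
  (\int[mu]_(tau in B) ((g v tau)%:E * k tau))%E \is a fin_num.
Proof.
apply: (@integral_weighted_fin_num _ _ _ mu B k g D zeta2) => //.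
- exact: measurable_funTS k_meas.
- by move=> w /measurable_g/measurable_funTS.
- exact: measurable_funTS D_meas.
Qed.

Lemma gtilde0 : gtilde mu K g tau0 0 = 0.
Proof.
rewrite /gtilde (_ : (fun tau => _) = cst 0%E) ?integral0 //.
by apply/funext => tau; rewrite g0 mul0e.
Qed.

Lemma gtilde_nondecr v w : 0 <= v -> v <= w -> w <= zeta2 ->
  gtilde mu K g tau0 v <= gtilde mu K g tau0 w.
Proof.
move=> v_ge0 vw wz2; have w_ge0 := le_trans v_ge0 vw.
apply: fine_le; rewrite ?integral_fin_num ?v_ge0 ?w_ge0 ?wz2 ?(le_trans vw wz2) //.
apply: ge0_le_integral => //.
- by move=> tau _; rewrite mule_ge0 ?k_ge0 ?lee_fin ?g_ge0.
- exact/measurable_funTS/gk_meas.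
- exact/measurable_funTS/gk_meas.
- by move=> tau B_tau; rewrite lee_wpmul2r ?k_ge0 // lee_fin g_incr.
Qed.

Lemma gtilde_right_ratio_cvg : gtilde mu K g tau0 v / v @[v --> 0^'+] -->
  fine (\int[mu]_(tau in B) ((g'0 tau)%:E * k tau))%E.
Proof.
apply: (@integral_right_ratio_cvg _ _ _ mu B k g g'0 D zeta2) => //.
- exact: measurable_funTS k_meas.
- by apply: filterS (kint_fin_num_ae mu K K_ge0 K_int) => tau + _.
- by move=> w /measurable_g/measurable_funTS.
- exact: measurable_funTS D_meas.
Qed.

Lemma kint_atom_fin_num : k tau0 \is a fin_num.
Proof.
rewrite ge0_fin_numE ?k_ge0 //; apply: le_lt_trans (integral_kint_lty mu K K_ge0 K_int).
rewrite (ge0_integral_atom_split mu tau0 tau0_meas tau0_mu) //.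
by apply: leeDl; apply: integral_ge0 => tau _; exact: k_ge0.
Qed.

Lemma chi0_lt0_gt1 : (chi mu K g'0 0 < 0)%E ->
  1 < fine (k tau0) * g'0 tau0 + fine (\int[mu]_(tau in B) ((g'0 tau)%:E * k tau))%E.
Proof.
have g'0k_meas : measurable_fun setT (fun tau => (g'0 tau)%:E * k tau)%E.
  apply: emeasurable_funM; last exact: k_meas.
  apply/measurable_EFinP; apply: measurable_fun_right_ratio_limit => [v /ltW|tau _].
    exact: measurable_g.
  exact: g_ratio.
have L_fin : (\int[mu]_(tau in B) ((g'0 tau)%:E * k tau))%E \is a fin_num.
  apply: (@integral_weighted_limit_fin_num _ _ _ mu B k g g'0 D zeta2) => //.
  - exact: measurable_funTS k_meas.
  - by move=> w /measurable_g/measurable_funTS.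
  - exact: measurable_funTS D_meas.
have chi0_eq : chi mu K g'0 0 = (1 - (g'0 tau0 * fine (k tau0) +
    fine (\int[mu]_(tau in B) ((g'0 tau)%:E * k tau))))%:E.
  rewrite /chi; under eq_integral do
    rewrite (integral_kernel_expR0 mu K K_ge0 K_int) ?(ltW (g'0_pos _)) //.
  rewrite (ge0_integral_atom_split mu tau0 tau0_meas tau0_mu) //; last first.
    by move=> tau; rewrite mule_ge0 ?k_ge0 ?lee_fin ?(ltW (g'0_pos tau)).
  by rewrite EFinB EFinD EFinM !fineK // kint_atom_fin_num.
by rewrite chi0_eq lte_fin subr_lt0 mulrC.
Qed.

End PerturbationTerm.

Theorem lemma1p6 (R : realType) (d : measure_display) (X : measurableType d)
  (mu : {finite_measure set X -> \bar R})
  (K : R * X -> R) (g : R -> X -> R) (g'0 : X -> R)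
  (* standing assumptions on K *)
  (K_meas : measurable_fun setT K)
  (K_ge0 : forall p, 0 <= K p)
  (K_int : (lebesgue_measure \x mu)%E.-integrable setT (EFin \o K))
  (K_pos : forall tau, (0 < kint K tau)%E)
  (* standing assumptions on g *)
  (g_meas : measurable_fun [set p : R * X | 0 <= p.1] (fun p => g p.1 p.2))
  (g_ge0 : forall v tau, 0 <= v -> 0 <= g v tau)
  (g0 : forall tau, g 0 tau = 0)
  (g_cont : forall tau, {within `[0, +oo[, continuous (fun v => g v tau)})
  (g'0_der : forall tau,
     (fun h => (g h tau - g 0 tau) / h) @ 0^'+ --> g'0 tau)
  (g'0_pos : forall tau, 0 < g'0 tau)
  (* chi(0) < 0 *)
  (chi0 : (chi mu K g'0 0 < 0)%E)
  (* condition (C) *)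
  (HC : condC mu K g)
  (* condition (N1) *)
  (tau0 : X) (tau0_meas : measurable [set tau0])
  (tau0_mu : mu [set tau0] = 1%E)
  (g_incr : forall tau, tau <> tau0 ->
     forall v w, 0 <= v -> v <= w -> g v tau <= g w tau)
  (g_tau0_pos : forall v, 0 < v -> 0 < g v tau0)
  (* condition (N2) *)
  (zeta2 : R) (zeta2_pos : 0 < zeta2)
  (Theta_incr : forall v w, 0 <= v -> v < w -> w <= zeta2 ->
     Theta mu K g tau0 v < Theta mu K g tau0 w)
  (M : R) (M_attained : exists v, 0 <= v /\ g v tau0 = M)
  (M_max : forall v, 0 <= v -> g v tau0 <= M)
  (HN2 : fine (kint K tau0) * M < Theta mu K g tau0 zeta2) :
  let G := Gmap mu K g tau0 zeta2 in
  exists zeta1 : R, 0 < zeta1 < zeta2 /\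
    (* (1) *)
    ({within `[0, +oo[, continuous G} /\
     (forall s, 0 <= s -> 0 <= G s) /\
     (forall s, 0 < s -> 0 < G s) /\
     (exists l : \bar R, (1%:E < l)%E /\
        (fun h => ((G h - G 0) / h)%:E) @ 0^'+ --> l)) /\
    (* (2) *)
    ((forall s, zeta1 <= s <= zeta2 -> zeta1 <= G s <= zeta2) /\
     (forall s, 0 <= s -> 0 <= G s <= zeta2)) /\
    (* (3) *)
    ((forall s, zeta1 <= s <= zeta2 -> G zeta1 <= G s) /\
     (forall s, 0 < s <= zeta1 -> s < G s)).
Proof.
move=> G; have [D [D_meas [_ [D_bound D_lty]]]] := HC zeta2 zeta2_pos.
pose C := fine (kint K tau0).
have C_gt0 : 0 < C.
  by rewrite -lte_fin fineK ?K_pos // (kint_atom_fin_num mu).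
have C_g_cont : {within `[0, +oo[, continuous (fun s => C * g s tau0)}.
  apply: within_continuous_comp (g_cont tau0) => x _; exact: mulrl_continuous.
have C_g_ratio : C * g h tau0 / h @[h --> 0^'+] --> C * g'0 tau0.
  under eq_fun do rewrite -mulrA; apply: cvgMl_tmp.
  by have := g'0_der tau0; rewrite g0; under eq_fun do rewrite subr0.
apply: (inverse_composition_properties (gtilde mu K g tau0)
  (fun s => C * g s tau0) zeta2 _ (C * g'0 tau0) zeta2_pos).
- exact: gtilde0.
- by move=> v w; apply: (gtilde_nondecr _ _ _ _ _ D).
- exact: Theta_incr.
- by apply: (gtilde_right_ratio_cvg _ _ _ g'0 _ zeta2 D).
- exact: C_g_cont.
- by rewrite g0 mulr0.
- by move=> s s_gt0; rewrite mulr_gt0 ?g_tau0_pos.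
- by move=> s s_ge0; apply: le_lt_trans HN2; rewrite ler_wpM2l ?M_max ?(ltW C_gt0).
- exact: C_g_ratio.
- by rewrite mulr_gt0.
- by apply: (chi0_lt0_gt1 _ _ g _ _ zeta2 D).
Qed.
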